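(* Let $\{x_i\}_{i\in[N]}$ be the global solution of the delayed consensus system described in the context. Then for all $K\in\mathbb{N}$, \[ \Delta^K_x\le\Delta^0_x+(1+\sigma)\Delta^{K-1}_x+\sigma\sum_{k=0}^{K-1}\Delta^k_x. \]
   Context: Let $N\ge2$, $d\ge1$ be integers, $[N]=\{1,\dots,N\}$, $0\le\sigma\le\tau$. Let $\psi:[0,\infty)\to[0,\infty)$ be continuous, nonincreasing, positive everywhere, with $\sup\psi\le1$. Given $x_i^0\in C([-\tau,0],\mathbb{R}^d)$, $\{x_i\}$ is the global solution (continuous on $[-\tau,\infty)$, continuously differentiable on $[0,\infty)$) of $\dot x_i(t)=\sum_{j\ne i}a_{ij}(t)(x_j(t-\tau)-x_i(t-\sigma))$ for $t>0$, with $a_{ij}(t)=\frac1{N-1}\psi(|x_i(t-\sigma)-x_j(t-\tau)|)$, and $x_i=x_i^0$ on $[-\tau,0]$. Define $\Delta^0_x:=\max_{i,j\in[N]}\max_{s,t\in[-\tau,0]}|x_i^0(s)-x_j^0(t)|$ and, for $K\in\mathbb{N}$ ($K\ge1$), \[ \Delta^K_x:=\max_{i,j\in[N]}\max_{t\in[-\tau,K\sigma]}\max_{s\in[(K-1)\sigma,K\sigma]}|x_j(t)-x_i(s)|. \] *)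

From HB Require Import structures.
From mathcomp Require Import all_boot all_order all_algebra.
From mathcomp Require Import all_classical all_reals all_analysis.
Set Implicit Arguments. Unset Strict Implicit. Unset Printing Implicit Defensive.
Import Order.TTheory GRing.Theory Num.Theory.
Import numFieldNormedType.Exports.
Local Open Scope classical_set_scope.
Local Open Scope ring_scope.

Definition enorm {R : realType} {d : nat} (v : 'rV[R]_d) : R :=
  Num.sqrt (\sum_(k < d) v ord0 k ^+ 2).

Definition cs_rhs {R : realType} {N d : nat} (psi : R -> R) (sigma tau : R)
  (x : 'I_N -> R -> 'rV[R]_d) (i : 'I_N) (t : R) : 'rV[R]_d :=
  \sum_(j < N | j != i)
     (((N%:R - 1)^-1 * psi (enorm (x i (t - sigma) - x j (t - tau))))
        *: (x j (t - tau) - x i (t - sigma))).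

(* x is a global solution: continuous on [-tau, oo), differentiable for t > 0,
   satisfying the ODE for t > 0 (the initial data are the restrictions of x to
   [-tau, 0]). *)
Definition is_global_solution {R : realType} {N d : nat} (psi : R -> R)
  (sigma tau : R) (x : 'I_N -> R -> 'rV[R]_d) : Prop :=
  (forall i, {within `[- tau, +oo[, continuous (x i)}) /\
  (forall i (t : R), 0 < t -> derivable (x i) t 1) /\
  (forall i (t : R), 0 < t -> derive1 (x i) t = cs_rhs psi sigma tau x i t).

(* Delta^0_x and Delta^K_x (K >= 1), the maxima being written as suprema *)
Definition Delta {R : realType} {N d : nat} (sigma tau : R)
  (x : 'I_N -> R -> 'rV[R]_d) (K : nat) : R :=
  if K is 0 then
    sup [set r | exists (i j : 'I_N) (s t : R),
           [/\ - tau <= s <= 0, - tau <= t <= 0 & r = enorm (x i s - x j t)]]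
  else
    sup [set r | exists (i j : 'I_N) (t s : R),
           [/\ - tau <= t <= K%:R * sigma,
               K.-1%:R * sigma <= s <= K%:R * sigma
             & r = enorm (x j t - x i s)]].

From HB Require Import structures.
From mathcomp Require Import all_boot all_order all_algebra.
From mathcomp Require Import all_classical all_reals all_analysis.
From mathcomp Require Import ring lra.
Set Implicit Arguments. Unset Strict Implicit. Unset Printing Implicit Defensive.
Import Order.TTheory GRing.Theory Num.Theory.
Import numFieldNormedType.Exports.
Local Open Scope classical_set_scope.
Local Open Scope ring_scope.

(* Every Delta^K is a supremum of distances between values of the continuous
   solution on a compact time window, hence finite.  Put a = (K-1) sigma and
   D = Delta^(K-1).  For t in (a, a + sigma] both delayed arguments t - tau and
   t - sigma lie in the window of Delta^(K-1); since 0 <= psi <= 1 and the N - 1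
   weights 1/(N-1) sum to 1, the right-hand side of the system has norm at most
   D, and the mean value theorem moves every agent by at most sigma D on
   [a, a + sigma].  Routing x_j(t) - x_i(s) through x_i(a), and through x_j(a)
   when t > a, gives Delta^K <= (1 + 2 sigma) Delta^(K-1), which the claimed
   bound dominates because its sum contains sigma Delta^(K-1) and every Delta
   is nonnegative. *)

Section EuclideanNorm.
Variables (R : realType) (d : nat).
Implicit Types (u v w : 'rV[R]_d).

Definition dot u v : R := \sum_(k < d) u ord0 k * v ord0 k.

Lemma dotBl u v w : dot (u - v) w = dot u w - dot v w.
Proof. by rewrite /dot -sumrB; apply: eq_bigr => k _; rewrite !mxE mulrBl. Qed.

Lemma enormE v : enorm v = Num.sqrt (dot v v).
Proof. by congr Num.sqrt; apply: eq_bigr => k _; rewrite expr2. Qed.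

Lemma dotvv_ge0 v : 0 <= dot v v.
Proof. by apply: sumr_ge0 => k _; rewrite -expr2 sqr_ge0. Qed.

Lemma enorm_ge0 v : 0 <= enorm v.
Proof. exact: sqrtr_ge0. Qed.

Lemma enorm_sqr v : enorm v ^+ 2 = dot v v.
Proof. by rewrite enormE sqr_sqrtr ?dotvv_ge0. Qed.

Lemma enorm0 : enorm (0 : 'rV[R]_d) = 0.
Proof. by rewrite enormE /dot big1 ?sqrtr0 // => k _; rewrite mxE mul0r. Qed.

Lemma enormZ c v : enorm (c *: v) = `|c| * enorm v.
Proof.
rewrite !enormE -sqrtr_sqr -sqrtrM ?sqr_ge0 // /dot mulr_sumr.
by congr Num.sqrt; apply: eq_bigr => k _; rewrite !mxE; ring.
Qed.

Lemma enormN v : enorm (- v) = enorm v.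
Proof. by rewrite -scaleN1r enormZ normrN normr1 mul1r. Qed.

Lemma enormBC u v : enorm (u - v) = enorm (v - u).
Proof. by rewrite -opprB enormN. Qed.

(* Lagrange's identity: the defect in Cauchy-Schwarz is a sum of squares. *)
Lemma dot_sqr_le u v : dot u v ^+ 2 <= dot u u * dot v v.
Proof.
pose sq k l := (u ord0 k * v ord0 l - u ord0 l * v ord0 k) ^+ 2.
have lagrange : \sum_k \sum_l sq k l = (dot u u * dot v v - dot u v ^+ 2) *+ 2.
  have -> : (dot u u * dot v v - dot u v ^+ 2) *+ 2 =
      dot u u * dot v v + dot v v * dot u u - dot u v * dot u v
      - dot u v * dot u v by ring.
  rewrite /dot !big_distrlr -big_split -!sumrB; apply: eq_bigr => k _.
  by rewrite -big_split -!sumrB; apply: eq_bigr => l _; rewrite /sq /=; ring.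
rewrite -subr_ge0 -(pmulrn_lge0 _ (isT : (0 < 2)%N)) -lagrange.
by apply: sumr_ge0 => k _; apply: sumr_ge0 => l _; exact: sqr_ge0.
Qed.

Lemma dot_le_enorm u v : dot u v <= enorm u * enorm v.
Proof.
rewrite !enormE -sqrtrM ?dotvv_ge0 //; apply: le_trans (ler_norm _) _.
by rewrite -sqrtr_sqr ler_sqrt ?dot_sqr_le // mulr_ge0 ?dotvv_ge0.
Qed.

Lemma ler_enormD u v : enorm (u + v) <= enorm u + enorm v.
Proof.
rewrite -(ger0_norm (addr_ge0 (enorm_ge0 u) (enorm_ge0 v))) -sqrtr_sqr.
rewrite enormE ler_sqrt ?sqr_ge0 //.
have -> : dot (u + v) (u + v) = dot u u + 2 * dot u v + dot v v.
  rewrite /dot mulr_sumr -!big_split.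
  by apply: eq_bigr => k _; rewrite !mxE /=; ring.
have := dot_le_enorm u v; rewrite -!enorm_sqr; nra.
Qed.

Lemma ler_enorm_sum (I : finType) (P : pred I) (F : I -> 'rV[R]_d) :
  enorm (\sum_(i | P i) F i) <= \sum_(i | P i) enorm (F i).
Proof.
elim/big_rec2: _ => [|i y e _ ye]; first by rewrite enorm0.
by apply: le_trans (ler_enormD _ _) _; rewrite lerD2l.
Qed.

Lemma dot_continuous (T : topologicalType) (f g : T -> 'rV[R]_d) :
  continuous f -> continuous g -> continuous (fun z => dot (f z) (g z)).
Proof.
move=> cf cg z; rewrite /dot.
have coord (h : T -> 'rV[R]_d) k :
    continuous h -> continuous (fun z => h z ord0 k : R).
  move=> ch z'.
  exact: (continuous_comp (ch z') (@coord_continuous _ _ _ ord0 k _)).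
have -> : (fun z => \sum_(k < d) f z ord0 k * g z ord0 k)
    = \sum_(k < d) (fun z => f z ord0 k * g z ord0 k) by rewrite fct_sumE.
elim/big_ind: _ => [|h1 h2|k _]; first exact: cst_continuous.
  exact: continuousD.
by apply: continuousM; apply: coord.
Qed.

Lemma enorm_continuous (T : topologicalType) (f : T -> 'rV[R]_d) :
  continuous f -> continuous (fun z => enorm (f z)).
Proof.
move=> cf z; rewrite (_ : (fun z => _) = Num.sqrt \o fun z => dot (f z) (f z)).
  by apply: continuous_comp; [exact: dot_continuous | exact: sqrt_continuous].
by apply/funext => z' /=; rewrite enormE.
Qed.

Lemma is_derive_dot (y : R -> 'rV[R]_d) r w (dy : derivable y r 1) :
  is_derive r 1 (fun t => dot (y t) w) (dot ('D_1 y r) w).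
Proof.
rewrite /dot (_ : (fun t => _) =
    \sum_(k < d) (fun t => y t ord0 k * w ord0 k)); last by rewrite fct_sumE.
apply: is_derive_sum => k.
have dyk : is_derive r 1 (fun t => y t ord0 k) ('D_1 y r ord0 k).
  rewrite derive_mx // mxE; apply: derivableP.
  by move/derivable_mxP : dy; apply.
rewrite (_ : (fun t => _) = (fun t => y t ord0 k) * cst (w ord0 k)) //.
have := is_deriveM dyk (is_derive_cst (w ord0 k) r 1).
by rewrite scaler0 add0r [_ * w ord0 k]mulrC.
Qed.

Lemma enorm_increment_le (y : R -> 'rV[R]_d) (a b B : R) : a <= b ->
  {within `[a, b], continuous y} ->
  (forall t, t \in `]a, b[ -> derivable y t 1) ->
  (forall t, t \in `]a, b[ -> enorm ('D_1 y t) <= B) ->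
  enorm (y b - y a) <= B * (b - a).
Proof.
rewrite le_eqVlt => /predU1P[<-|ab] yc yd yB.
  by rewrite !subrr enorm0 mulr0.
set w := y b - y a.
have [c cab] := MVT ab (fun t tab => is_derive_dot w (yd t tab))
  (dot_continuous yc (@cst_continuous _ _ w)).
rewrite -dotBl -/w -enorm_sqr => w_sqr.
have ba_ge0 : 0 <= b - a by rewrite subr_ge0 ltW.
have w_sqr_le : enorm w ^+ 2 <= B * (b - a) * enorm w.
  rewrite w_sqr mulrAC ler_wpM2r //; apply: le_trans (dot_le_enorm _ _) _.
  by rewrite ler_wpM2r ?enorm_ge0 ?yB.
have : 0 <= B * (b - a).
  by rewrite mulr_ge0 //; apply: le_trans (yB c cab); apply: enorm_ge0.
have := enorm_ge0 w; nra.
Qed.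

Lemma enorm_bounded_on (y : R -> 'rV[R]_d) a b :
  {within `[a, b], continuous y} ->
  exists M, forall t, a <= t <= b -> enorm (y t) <= M.
Proof.
move=> yc; have [ab|ba] := leP a b; last by exists 0 => t; lra.
have [c _ c_max] := EVT_max ab (enorm_continuous yc).
by exists (enorm (y c)) => t tab; apply: c_max; rewrite in_itv.
Qed.

End EuclideanNorm.

Section SupNonneg.
Variable R : realType.
Implicit Types (E : set R).

Lemma sup_ge0 E : (forall r, E r -> 0 <= r) -> 0 <= sup E.
Proof.
move=> E_ge0; have [[[r Er] E_ub]|/sup_out->//] := pselect (has_sup E).
exact: le_trans (E_ge0 r Er) (ub_le_sup E_ub Er).
Qed.

Lemma ge_sup_ge0 E x : 0 <= x -> ubound E x -> sup E <= x.
Proof.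
move=> x_ge0 E_le_x; have [E0|/sup_out->//] := pselect (has_sup E).
exact: ge_sup E0.1 E_le_x.
Qed.

End SupNonneg.

Section DelayedConsensus.
Variables (R : realType) (N d : nat) (sigma tau : R) (psi : R -> R).
Variable x : 'I_N -> R -> 'rV[R]_d.
Hypothesis N_gt1 : (1 < N)%N.
Hypothesis sigma_ge0 : 0 <= sigma.
Hypothesis sigma_le_tau : sigma <= tau.
Hypothesis psi_ge0 : forall r, 0 <= r -> 0 <= psi r.
Hypothesis psi_le1 : forall r, 0 <= r -> psi r <= 1.
Hypothesis x_sol : is_global_solution psi sigma tau x.

Lemma enorm_cs_rhs_le i (t D : R) :
  (forall j, j != i -> enorm (x j (t - tau) - x i (t - sigma)) <= D) ->
  enorm (cs_rhs psi sigma tau x i t) <= D.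
Proof.
move=> dist_le; have N1_gt0 : 0 < (N%:R - 1 : R) by rewrite subr_gt0 ltr1n.
have N1inv_ge0 : 0 <= (N%:R - 1)^-1 :> R by rewrite invr_ge0 ltW.
apply: le_trans (ler_enorm_sum _ _) _.
apply: (@le_trans _ _ (\sum_(j < N | j != i) (N%:R - 1)^-1 * D)).
  apply: ler_sum => j ji; set r := enorm (x i _ - _).
  have r_ge0 : 0 <= r := enorm_ge0 _.
  have [psi_r_ge0 psi_r_le1] := (psi_ge0 r_ge0, psi_le1 r_ge0).
  rewrite enormZ ger0_norm ?mulr_ge0 // -mulrA ler_wpM2l //.
  have := dist_le j ji; have := enorm_ge0 (x j (t - tau) - x i (t - sigma)).
  nra.
rewrite (eq_bigl (fun j => j \in predC1 i)) // sumr_const cardC1 card_ord.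
rewrite -[_ *+ N.-1]mulr_natr -subn1 natrB 1?ltnW //.
by rewrite mulrAC mulVf ?mul1r // gt_eqF.
Qed.

Lemma solution_bounded (T : R) :
  exists M, forall i t, - tau <= t <= T -> enorm (x i t) <= M.
Proof.
have : forall i, exists M, forall t, - tau <= t <= T -> enorm (x i t) <= M.
  move=> i; apply: enorm_bounded_on.
  apply: continuous_subspaceW (x_sol.1 i) => t /=.
  by rewrite !in_itv /= => /andP[-> _].
case/fin_all_exists => M M_bnd.
exists (\big[Num.max/0]_i M i) => i t t_in.
exact: le_trans (M_bnd i t t_in) (le_bigmax _ _ _).
Qed.

Lemma dist_bounded (T : R) : exists M, forall i j (t s : R),
  - tau <= t <= T -> - tau <= s <= T -> enorm (x j t - x i s) <= M.
Proof.
have [M M_bnd] := solution_bounded T; exists (M + M) => i j t s t_in s_in.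
by apply: le_trans (ler_enormD _ _) _; rewrite enormN lerD ?M_bnd.
Qed.

Lemma Delta_ge0 K : 0 <= Delta sigma tau x K.
Proof.
by case: K => [|K]; apply: sup_ge0 => r [i [j [s [t [_ _ ->]]]]];
  exact: enorm_ge0.
Qed.

Lemma dist_le_Delta0 i j (s t : R) : - tau <= s <= 0 -> - tau <= t <= 0 ->
  enorm (x i s - x j t) <= Delta sigma tau x 0.
Proof.
move=> s_in t_in; have [M M_bnd] := dist_bounded 0.
apply: ub_le_sup; last by exists i, j, s, t.
by exists M => r [i' [j' [s' [t' [s'_in t'_in ->]]]]]; exact: M_bnd.
Qed.

Lemma dist_le_DeltaS K i j (t s : R) :
  - tau <= t <= K.+1%:R * sigma -> K%:R * sigma <= s <= K.+1%:R * sigma ->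
  enorm (x j t - x i s) <= Delta sigma tau x K.+1.
Proof.
have Ksigma_ge0 : 0 <= K%:R * sigma by rewrite mulr_ge0.
move=> t_in s_in; have [M M_bnd] := dist_bounded (K.+1%:R * sigma).
apply: ub_le_sup; last by exists i, j, t, s.
exists M => r [i' [j' [t' [s' [t'_in /= s'_in ->]]]]].
by apply: M_bnd => //; have := le_trans sigma_ge0 sigma_le_tau; lra.
Qed.

Lemma DeltaS_le_ub K (B : R) : 0 <= B ->
  (forall i j (t s : R), - tau <= t <= K.+1%:R * sigma ->
     K%:R * sigma <= s <= K.+1%:R * sigma -> enorm (x j t - x i s) <= B) ->
  Delta sigma tau x K.+1 <= B.
Proof.
move=> B_ge0 dist_le; apply: ge_sup_ge0 => // r [i [j [t [s [t_in s_in ->]]]]].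
exact: dist_le.
Qed.

Lemma delayed_dist_le_Delta K i j (u v : R) :
  - tau <= u <= K%:R * sigma -> K%:R * sigma - sigma <= v <= K%:R * sigma ->
  - tau <= v -> enorm (x j u - x i v) <= Delta sigma tau x K.
Proof.
case: K => [|K] u_in v_in v_ge.
  by rewrite mul0r in u_in v_in; apply: dist_le_Delta0; lra.
rewrite -natr1 mulrDl mul1r addrK in v_in.
by apply: dist_le_DeltaS; rewrite -?natr1 ?mulrDl ?mul1r; lra.
Qed.

Lemma increment_le_Delta K i (s : R) : K%:R * sigma <= s <= K.+1%:R * sigma ->
  enorm (x i s - x i (K%:R * sigma)) <= sigma * Delta sigma tau x K.
Proof.
have st := sigma_le_tau.
set a := K%:R * sigma; have a_ge0 : 0 <= a by rewrite mulr_ge0.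
rewrite -natr1 mulrDl mul1r -/a => /andP[a_le_s s_le].
have [x_cont [x_der x_ode]] := x_sol.
apply: le_trans (enorm_increment_le (B := Delta sigma tau x K) a_le_s _ _ _) _.
- apply: continuous_subspaceW (x_cont i) => t /=.
  by rewrite !in_itv /= andbT => /andP[a_le_t _]; lra.
- by move=> t; rewrite in_itv /= => /andP[a_lt_t _]; apply: x_der; lra.
- move=> t; rewrite in_itv /= => /andP[a_lt_t t_lt_s].
  rewrite -derive1E x_ode; last by lra.
  apply: enorm_cs_rhs_le => j _.
  by apply: delayed_dist_le_Delta; rewrite -/a; lra.
- by rewrite [sigma * _]mulrC ler_wpM2l ?Delta_ge0 //; lra.
Qed.

Lemma DeltaS_le_Delta K :
  Delta sigma tau x K.+1 <= (1 + 2 * sigma) * Delta sigma tau x K.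
Proof.
set a := K%:R * sigma; set D := Delta sigma tau x K.
have a_ge0 : 0 <= a by rewrite mulr_ge0.
have D_ge0 : 0 <= D := Delta_ge0 K.
have [s0 st] := (sigma_ge0, sigma_le_tau).
have aS : K.+1%:R * sigma = a + sigma by rewrite -natr1 mulrDl mul1r.
apply: DeltaS_le_ub => [|i j t s]; first by rewrite mulr_ge0 //; lra.
rewrite aS => t_in s_in.
have step_i : enorm (x i a - x i s) <= sigma * D.
  by rewrite enormBC; apply: increment_le_Delta; rewrite aS.
have [t_le_a|a_lt_t] := lerP t a.
  have -> : x j t - x i s = (x j t - x i a) + (x i a - x i s).
    by rewrite addrA subrK.
  have : enorm (x j t - x i a) <= D by apply: delayed_dist_le_Delta; lra.
  have := ler_enormD (x j t - x i a) (x i a - x i s); nra.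
have step_j : enorm (x j t - x j a) <= sigma * D.
  by apply: increment_le_Delta; rewrite aS; lra.
have agents_at_a : enorm (x j a - x i a) <= D.
  by apply: delayed_dist_le_Delta; lra.
have -> : x j t - x i s = (x j t - x j a) + (x j a - x i a) + (x i a - x i s).
  by rewrite !addrA !subrK.
have := ler_enormD (x j t - x j a + (x j a - x i a)) (x i a - x i s).
have := ler_enormD (x j t - x j a) (x j a - x i a); nra.
Qed.

End DelayedConsensus.

Theorem lemma3p6 (R : realType) (N d : nat) (sigma tau : R) (psi : R -> R)
  (x : 'I_N -> R -> 'rV[R]_d) :
  (2 <= N)%N -> (1 <= d)%N ->
  0 <= sigma -> sigma <= tau ->
  {within `[0, +oo[, continuous psi} ->
  (forall r s : R, 0 <= r -> r <= s -> psi s <= psi r) ->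
  (forall r : R, 0 <= r -> 0 < psi r) ->
  (forall r : R, 0 <= r -> psi r <= 1) ->
  is_global_solution psi sigma tau x ->
  forall K : nat, (1 <= K)%N ->
    Delta sigma tau x K <=
      Delta sigma tau x 0 + (1 + sigma) * Delta sigma tau x K.-1
      + sigma * \sum_(k < K) Delta sigma tau x k.
Proof.
move=> N_gt1 _ sigma_ge0 sigma_le_tau _ _ psi_gt0 psi_le1 x_sol [//|K] _.
have psi_ge0 r : 0 <= r -> 0 <= psi r by move/psi_gt0/ltW.
have := DeltaS_le_Delta N_gt1 sigma_ge0 sigma_le_tau psi_ge0 psi_le1 x_sol K.
move/le_trans; apply.
rewrite big_ord_recr /= -/(Delta sigma tau x 0) mulrDr.
have earlier_ge0 : 0 <= sigma * \sum_(k < K) Delta sigma tau x k.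
  by rewrite mulr_ge0 // sumr_ge0 // => k _; exact: Delta_ge0.
have := Delta_ge0 sigma tau x 0; have := Delta_ge0 sigma tau x K; nra.
Qed.
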